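(* Let $N\ge1$, $n>0$, $k>0$, and $\gamma>0$, and suppose all $N$ channels have SNR $\gamma$. Then the optimization problem $$\max_{k_0,\dots,k_{N-1}}\prod_{i=0}^{N-1}\bigl(1-\epsilon(n,k_i,\gamma)\bigr)\quad\text{subject to }\sum_{i=0}^{N-1}k_i=k,\ k_i\ge0,$$ over real $k_i$ (equivalently, minimizing the message-splitting average AoI $\bar\Delta_{\mathrm{MS}}(n)$ over the message split) is solved by $\mathbf{k}^*=\left(\frac kN,\dots,\frac kN\right)$.
   Context: $Q(x)=\frac{1}{\sqrt{2\pi}}\int_x^\infty e^{-t^2/2}dt$ and $\epsilon(n,k,\gamma)=Q\!\left(\frac{\frac12\log_2(1+\gamma)-\frac kn}{\log_2(e)\sqrt{\frac{1}{2n}\left(1-\frac{1}{(1+\gamma)^2}\right)}}\right)$. In the message splitting (MS) scheme the $k$ message bits are split into fragments $k_0,\dots,k_{N-1}$ with $\sum k_i=k$, fragment $i$ is encoded with blocklength $n$ on channel $i$, the error probability is $\epsilon_{\mathrm{MS}}(n)=1-\prod_{i}(1-\epsilon(n,k_i,\gamma_i))$, and $\bar\Delta_{\mathrm{MS}}(n)=\frac{n(1+\epsilon_{\mathrm{MS}}(n))}{2(1-\epsilon_{\mathrm{MS}}(n))}+n$. *)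

From Stdlib Require Import Reals.
From Coquelicot Require Import Coquelicot.
Open Scope R_scope.

Definition Qfun (x : R) : R :=
  / sqrt (2 * PI) * RInt_gen (fun t => exp (- t ^ 2 / 2)) (at_point x) (Rbar_locally p_infty).

Definition log2 (x : R) : R := ln x / ln 2.

Definition eps (n : nat) (k gamma : R) : R :=
  Qfun ((/ 2 * log2 (1 + gamma) - k / INR n) /
        (log2 (exp 1) * sqrt (/ (2 * INR n) * (1 - / (1 + gamma) ^ 2)))).

Fixpoint sumN (N : nat) (f : nat -> R) : R :=
  match N with O => 0 | S m => sumN m f + f m end.
Fixpoint prodN (N : nat) (f : nat -> R) : R :=
  match N with O => 1 | S m => prodN m f * f m end.

From Stdlib Require Import Reals Lra Lia Psatz.
From Coquelicot Require Import Coquelicot.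
Open Scope R_scope.

(* Writing [1 - eps n z gamma] as [T (a z + b) / sqrt (2 pi)] with [T] the
   Gaussian tail [T y = int_y^oo exp (- t^2 / 2) dt] and an affine map
   [z |-> a z + b], the claim is Jensen's inequality for [ln T], which is
   concave: [(ln T)' = - exp (- y^2 / 2) / T y] is nonincreasing because
   Mills' inequality [y T y <= exp (- y^2 / 2)] makes the derivative of the
   inverse Mills ratio nonnegative.  Identifying [1 - Q] with a tail needs the
   value [sqrt (pi / 2)] of the half-line Gaussian integral, which comes from
   the conserved quantity
     [(int_0^x exp (- t^2 / 2) dt)^2
        + 2 int_0^1 exp (- x^2 (1 + t^2) / 2) / (1 + t^2) dt = pi / 2]
   (its derivative vanishes, and at [x = 0] it equals [2 atan 1]). *)

Lemma continuous_of_ex_derive (f : R -> R) x : ex_derive f x -> continuous f x.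
Proof. apply (ex_derive_continuous (K:=R_AbsRing) (V:=R_NormedModule)). Qed.

Lemma ex_RInt_of_continuous (f : R -> R) a b :
  (forall z, Rmin a b <= z <= Rmax a b -> continuous f z) -> ex_RInt f a b.
Proof. apply (ex_RInt_continuous (V:=R_CompleteNormedModule)). Qed.

Lemma exp_le_exp a b : a <= b -> exp a <= exp b.
Proof.
  intros H. destruct (Rle_lt_or_eq_dec a b H) as [H' | ->]; [| lra].
  apply Rlt_le, exp_increasing, H'.
Qed.

Lemma continuity_pt_of_is_derive (f : R -> R) x l : is_derive f x l -> continuity_pt f x.
Proof.
  intros H. apply continuity_pt_filterlim, continuous_of_ex_derive. exists l. exact H.
Qed.

Lemma nondecreasing_of_derive_nonneg (f df : R -> R) :
  (forall x, is_derive f x (df x)) -> (forall x, 0 <= df x) ->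
  forall a b, a <= b -> f a <= f b.
Proof.
  intros Df Dpos a b Hab.
  destruct (MVT_gen f a b df) as [c [_ E]].
  - intros; apply Df.
  - intros; eapply continuity_pt_of_is_derive, Df.
  - assert (D := Dpos c). nra.
Qed.

Lemma tangent_ge_of_derive_nonincreasing (f df : R -> R) :
  (forall x, is_derive f x (df x)) -> (forall a b, a <= b -> df b <= df a) ->
  forall m y, f y <= f m + df m * (y - m).
Proof.
  intros Df Dmono m y.
  destruct (MVT_gen f m y df) as [c [Hc E]].
  - intros; apply Df.
  - intros; eapply continuity_pt_of_is_derive, Df.
  - destruct (Rle_lt_dec m y) as [H | H].
    + rewrite Rmin_left, Rmax_right in Hc by lra.
      assert (df c <= df m) by (apply Dmono; lra). nra.
    + rewrite Rmin_right, Rmax_left in Hc by lra.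
      assert (df m <= df c) by (apply Dmono; lra). nra.
Qed.

(* Coquelicot states many equalities at carrier types convertible to [R];
   [req] restates the goal at [R] so that [ring] and [field] apply. *)
Ltac req := match goal with |- ?a = ?b => change (@eq R a b) end.

(** * The Gaussian integral *)

Definition gauss (t : R) : R := exp (- t ^ 2 / 2).
Definition gauss_int (x : R) : R := RInt gauss 0 x.
Definition gauss_half : R := sqrt (PI / 2).
Definition gauss_tail (y : R) : R := gauss_half - gauss_int y.

Lemma gauss_pos x : 0 < gauss x.
Proof. apply exp_pos. Qed.

Lemma is_derive_gauss y : is_derive gauss y (- y * gauss y).
Proof.
  unfold gauss. auto_derive; auto. req.
  replace (- y ^ 2 / 2) with (- (y * (y * 1)) * / 2) by field. field.
Qed.

Lemma gauss_continuous x : continuous gauss x.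
Proof. apply continuous_of_ex_derive. eexists. apply is_derive_gauss. Qed.

Lemma ex_RInt_gauss a b : ex_RInt gauss a b.
Proof. apply ex_RInt_of_continuous. intros; apply gauss_continuous. Qed.

Lemma is_derive_gauss_int x : is_derive gauss_int x (gauss x).
Proof.
  apply (is_derive_RInt gauss gauss_int 0 x).
  - apply filter_forall. intros b. apply (RInt_correct (V:=R_CompleteNormedModule)), ex_RInt_gauss.
  - apply gauss_continuous.
Qed.

Lemma RInt_gauss a b : RInt gauss a b = gauss_int b - gauss_int a.
Proof.
  unfold gauss_int.
  rewrite <- (RInt_Chasles (V:=R_CompleteNormedModule) gauss a 0 b) by apply ex_RInt_gauss.
  rewrite <- (opp_RInt_swap (V:=R_CompleteNormedModule) gauss 0 a) by apply ex_RInt_gauss.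
  unfold plus, opp; simpl. ring.
Qed.

Lemma gauss_int0 : gauss_int 0 = 0.
Proof. apply (RInt_point (V:=R_CompleteNormedModule)). Qed.

Lemma gauss_int_opp x : gauss_int (- x) = - gauss_int x.
Proof.
  unfold gauss_int.
  replace (- x) with (-1 * x + 0) by ring. replace 0 with (-1 * 0 + 0) at 1 by ring.
  rewrite <- (RInt_comp_lin (V:=R_CompleteNormedModule)) by apply ex_RInt_gauss.
  replace (-1 * 0 + 0) with 0 by ring.
  rewrite (RInt_ext _ (fun y => -1 * gauss y)).
  2:{ intros t _. unfold gauss. req. replace ((-1 * t + 0) ^ 2) with (t ^ 2) by ring. reflexivity. }
  rewrite (RInt_scal (V:=R_CompleteNormedModule)) by apply ex_RInt_gauss.
  unfold scal; simpl; unfold mult; simpl. req. ring.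
Qed.

Definition gauss_kernel (x t : R) : R := exp (- (x ^ 2 * (1 + t ^ 2)) / 2) / (1 + t ^ 2).
Definition gauss_aux (x : R) : R := RInt (gauss_kernel x) 0 1.

Lemma one_add_sqr_pos t : 0 < 1 + t ^ 2.
Proof. nra. Qed.

Lemma is_derive_gauss_kernel x t :
  is_derive (fun z => gauss_kernel z t) x (- x * exp (- (x ^ 2 * (1 + t ^ 2)) / 2)).
Proof.
  unfold gauss_kernel. assert (H := one_add_sqr_pos t).
  auto_derive; [lra |]. req.
  replace (- (x ^ 2 * (1 + t ^ 2)) / 2) with (- (x * (x * 1) * (1 + t * (t * 1))) * / 2) by field.
  field. lra.
Qed.

Lemma continuity_2d_Derive_gauss_kernel x t :
  continuity_2d_pt (fun u v => Derive (fun z => gauss_kernel z v) u) x t.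
Proof.
  apply continuity_2d_pt_ext with
    (f := fun u v => (- u) * exp ((- (u * u * (1 + v * v))) * / 2)).
  { intros u v. symmetry.
    replace (- (u * u * (1 + v * v)) * / 2) with (- (u ^ 2 * (1 + v ^ 2)) / 2) by field.
    apply is_derive_unique, is_derive_gauss_kernel. }
  apply continuity_2d_pt_mult.
  - apply continuity_2d_pt_opp, continuity_2d_pt_id1.
  - apply continuity_1d_2d_pt_comp.
    + apply derivable_continuous_pt, derivable_pt_exp.
    + apply continuity_2d_pt_mult; [| apply continuity_2d_pt_const].
      apply continuity_2d_pt_opp, continuity_2d_pt_mult.
      * apply continuity_2d_pt_mult; apply continuity_2d_pt_id1.
      * apply continuity_2d_pt_plus; [apply continuity_2d_pt_const |].
        apply continuity_2d_pt_mult; apply continuity_2d_pt_id2.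
Qed.

Lemma gauss_kernel_continuous x t : continuous (gauss_kernel x) t.
Proof.
  apply continuous_of_ex_derive. unfold gauss_kernel.
  assert (H := one_add_sqr_pos t). auto_derive. lra.
Qed.

Lemma ex_RInt_gauss_kernel x a b : ex_RInt (gauss_kernel x) a b.
Proof. apply ex_RInt_of_continuous. intros; apply gauss_kernel_continuous. Qed.

(* Differentiating under the integral sign and substituting [s = x t]. *)
Lemma is_derive_gauss_aux x : is_derive gauss_aux x (- gauss x * gauss_int x).
Proof.
  unfold gauss_aux.
  replace (- gauss x * gauss_int x)
    with (RInt (fun t => Derive (fun u => gauss_kernel u t) x) 0 1).
  { apply (is_derive_RInt_param gauss_kernel 0 1 x).
    - apply filter_forall. intros y t _. eexists. apply is_derive_gauss_kernel.
    - intros; apply continuity_2d_Derive_gauss_kernel.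
    - apply filter_forall. intros y. apply ex_RInt_gauss_kernel. }
  rewrite (RInt_ext _ (fun t => - gauss x * (x * gauss (x * t + 0)))).
  2:{ intros t _. erewrite is_derive_unique by apply is_derive_gauss_kernel.
      unfold gauss.
      replace (- (x ^ 2 * (1 + t ^ 2)) / 2) with (- x ^ 2 / 2 + - (x * t + 0) ^ 2 / 2) by field.
      rewrite exp_plus. req. ring. }
  rewrite (RInt_scal (V:=R_CompleteNormedModule)).
  2:{ apply ex_RInt_of_continuous. intros. apply continuous_of_ex_derive.
      unfold gauss. auto_derive. auto. }
  rewrite (RInt_comp_lin (V:=R_CompleteNormedModule)) by apply ex_RInt_gauss.
  unfold gauss_int, scal; simpl; unfold mult; simpl.
  rewrite Rmult_0_r, Rmult_1_r, !Rplus_0_r. reflexivity.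
Qed.

Lemma gauss_aux0 : gauss_aux 0 = PI / 4.
Proof.
  unfold gauss_aux. rewrite (RInt_ext _ (fun t => / (1 + t²))).
  2:{ intros t _. unfold gauss_kernel, Rsqr.
      replace (- (0 ^ 2 * (1 + t ^ 2)) / 2) with 0 by field.
      rewrite exp_0. req. field. nra. }
  rewrite <- atan_1. replace (atan 1) with (atan 1 - atan 0) by (rewrite atan_0; ring).
  apply (is_RInt_unique (V:=R_CompleteNormedModule)).
  apply (is_RInt_derive (V:=R_CompleteNormedModule) atan).
  - intros; apply is_derive_atan.
  - intros. apply continuous_of_ex_derive. auto_derive. unfold Rsqr. nra.
Qed.

Lemma gauss_int_sqr_add_aux x : gauss_int x ^ 2 + 2 * gauss_aux x = PI / 2.
Proof.
  set (F z := gauss_int z ^ 2 + 2 * gauss_aux z).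
  assert (D : forall y, is_derive F y 0).
  { intros y.
    replace 0 with (INR 2 * gauss y * gauss_int y ^ 1 + 2 * (- gauss y * gauss_int y))
      by (simpl; ring).
    apply (is_derive_plus (K:=R_AbsRing) (V:=R_NormedModule)).
    - apply is_derive_pow, is_derive_gauss_int.
    - apply is_derive_scal, is_derive_gauss_aux. }
  assert (F0 : F 0 = PI / 2) by (unfold F; rewrite gauss_int0, gauss_aux0; field).
  change (F x = PI / 2). rewrite <- F0.
  destruct (Rtotal_order 0 x) as [H | [<- | H]]; [symmetry | reflexivity |];
    apply eq_is_derive; auto.
Qed.

Lemma gauss_aux_pos x : 0 < gauss_aux x.
Proof.
  apply RInt_gt_0; [lra | | intros; apply gauss_kernel_continuous].
  intros t _. apply Rdiv_lt_0_compat; [apply exp_pos | apply one_add_sqr_pos].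
Qed.

Lemma gauss_kernel_le x t : gauss_kernel x t <= gauss x.
Proof.
  unfold gauss_kernel, gauss. assert (Ht := one_add_sqr_pos t).
  assert (E : exp (- (x ^ 2 * (1 + t ^ 2)) / 2) <= exp (- x ^ 2 / 2))
    by (apply exp_le_exp; nra).
  assert (E0 := exp_pos (- (x ^ 2 * (1 + t ^ 2)) / 2)).
  apply Rle_trans with (exp (- (x ^ 2 * (1 + t ^ 2)) / 2)); [| exact E].
  apply Rmult_le_reg_r with (1 + t ^ 2); [lra |].
  unfold Rdiv. rewrite Rmult_assoc, Rinv_l by lra. nra.
Qed.

Lemma gauss_aux_le_gauss x : gauss_aux x <= gauss x.
Proof.
  unfold gauss_aux. apply Rle_trans with (RInt (fun _ => gauss x) 0 1).
  - apply RInt_le; [lra | apply ex_RInt_gauss_kernel | apply ex_RInt_const |].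
    intros; apply gauss_kernel_le.
  - rewrite (RInt_const (V:=R_CompleteNormedModule)).
    unfold scal; simpl; unfold mult; simpl. lra.
Qed.

Lemma gauss_half_pos : 0 < gauss_half.
Proof. apply sqrt_lt_R0. assert (H := PI_RGT_0). lra. Qed.

Lemma gauss_half_sqr : gauss_half * gauss_half = PI / 2.
Proof. apply sqrt_sqrt. assert (H := PI_RGT_0). lra. Qed.

Lemma sqrt_2PI : sqrt (2 * PI) = 2 * gauss_half.
Proof.
  assert (H := gauss_half_pos). assert (S := gauss_half_sqr).
  apply sqrt_lem_1; nra.
Qed.

Lemma gauss_int_lt_half x : gauss_int x < gauss_half.
Proof.
  assert (K := gauss_int_sqr_add_aux x). assert (A := gauss_aux_pos x).
  assert (H := gauss_half_pos). assert (S := gauss_half_sqr). nra.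
Qed.

Lemma gauss_int_nonneg x : 0 <= x -> 0 <= gauss_int x.
Proof.
  intros H. apply RInt_ge_0; [exact H | apply ex_RInt_gauss |].
  intros; apply Rlt_le, gauss_pos.
Qed.

(* From [(gauss_half - gauss_int x) (gauss_half + gauss_int x) = 2 gauss_aux x]. *)
Lemma gauss_tail_le x : 0 <= x -> gauss_tail x <= 2 / gauss_half * gauss x.
Proof.
  intros Hx. unfold gauss_tail.
  assert (K := gauss_int_sqr_add_aux x). assert (A := gauss_aux_le_gauss x).
  assert (H := gauss_half_pos). assert (S := gauss_half_sqr).
  assert (P0 := gauss_int_nonneg x Hx). assert (Pl := gauss_int_lt_half x).
  apply Rmult_le_reg_l with gauss_half; [exact H |].
  replace (gauss_half * (2 / gauss_half * gauss x)) with (2 * gauss x) by (field; lra).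
  nra.
Qed.

Lemma gauss_le_inv x : 0 < x -> gauss x <= / x.
Proof.
  intros Hx. unfold gauss. replace (- x ^ 2 / 2) with (- (x ^ 2 / 2)) by field.
  rewrite exp_Ropp. apply Rinv_le_contravar; [exact Hx |].
  assert (E := exp_ineq1_le (x ^ 2 / 2)). nra.
Qed.

Lemma is_lim_gauss_int : is_lim gauss_int p_infty gauss_half.
Proof.
  assert (H := gauss_half_pos).
  apply is_lim_le_le_loc with
    (f := fun y => gauss_half - 2 / gauss_half * / y) (g := fun _ => gauss_half).
  - exists 0. intros y Hy. split.
    + assert (T := gauss_tail_le y (Rlt_le _ _ Hy)). assert (G := gauss_le_inv y Hy).
      unfold gauss_tail in T.
      assert (2 / gauss_half * gauss y <= 2 / gauss_half * / y)
        by (apply Rmult_le_compat_l; [apply Rlt_le, Rdiv_lt_0_compat |]; lra).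
      lra.
    + apply Rlt_le, gauss_int_lt_half.
  - eapply is_lim_minus; [apply is_lim_const | | ].
    + apply is_lim_scal_l. replace (Finite 0) with (Rbar_inv p_infty) by reflexivity.
      apply is_lim_inv; [apply is_lim_id | discriminate].
    + unfold is_Rbar_minus, is_Rbar_plus; simpl. rewrite Rmult_0_r, Ropp_0, Rplus_0_r.
      reflexivity.
  - apply is_lim_const.
Qed.

Lemma Derive_gauss_int x : Derive gauss_int x = gauss x.
Proof. apply is_derive_unique, is_derive_gauss_int. Qed.

Lemma is_RInt_gen_gauss a :
  is_RInt_gen gauss (at_point a) (Rbar_locally p_infty) (gauss_tail a).
Proof.
  apply (is_RInt_gen_ext (Derive gauss_int)).
  { apply filter_forall. intros ab x _. apply Derive_gauss_int. }
  apply is_RInt_gen_Derive.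
  - apply filter_forall. intros ab x _. eexists; apply is_derive_gauss_int.
  - apply filter_forall. intros ab x _.
    apply (continuous_ext gauss); [intros; symmetry; apply Derive_gauss_int |].
    apply gauss_continuous.
  - intros P HP. exact (locally_singleton _ _ HP).
  - exact is_lim_gauss_int.
Qed.

Lemma Qfun_gauss_tail x : Qfun x = gauss_tail x / (2 * gauss_half).
Proof.
  change (Qfun x) with (/ sqrt (2 * PI) * RInt_gen gauss (at_point x) (Rbar_locally p_infty)).
  rewrite sqrt_2PI.
  rewrite (is_RInt_gen_unique (V:=R_CompleteNormedModule) _ _ (is_RInt_gen_gauss x)).
  unfold Rdiv. apply Rmult_comm.
Qed.

Lemma one_sub_Qfun x : 1 - Qfun x = gauss_tail (- x) / (2 * gauss_half).
Proof.
  rewrite Qfun_gauss_tail. unfold gauss_tail. rewrite gauss_int_opp.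
  assert (H := gauss_half_pos). field. lra.
Qed.

(** * Log-concavity of the Gaussian tail *)

Lemma gauss_tail_pos y : 0 < gauss_tail y.
Proof. unfold gauss_tail. assert (H := gauss_int_lt_half y). lra. Qed.

Lemma is_derive_gauss_tail y : is_derive gauss_tail y (- gauss y).
Proof.
  unfold gauss_tail.
  replace (- gauss y) with (0 - gauss y) by ring.
  apply (is_derive_minus (K:=R_AbsRing) (V:=R_NormedModule)).
  - apply (is_derive_const (K:=R_AbsRing) (V:=R_NormedModule)).
  - apply is_derive_gauss_int.
Qed.

Lemma is_RInt_mul_gauss a b : is_RInt (fun t => t * gauss t) a b (gauss a - gauss b).
Proof.
  replace (gauss a - gauss b) with (- gauss b - - gauss a) by ring.
  apply (is_RInt_derive (V:=R_CompleteNormedModule) (fun t => - gauss t)).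
  - intros x _. replace (x * gauss x) with (- (- x * gauss x)) by ring.
    apply (is_derive_opp (K:=R_AbsRing) (V:=R_NormedModule)), is_derive_gauss.
  - intros. apply continuous_of_ex_derive. unfold gauss. auto_derive. auto.
Qed.

Lemma gauss_int_sub_le y b : 0 < y <= b -> gauss_int b - gauss_int y <= gauss y / y.
Proof.
  intros [Hy Hyb]. rewrite <- RInt_gauss.
  assert (Ex : ex_RInt (fun t => t * gauss t) y b) by (eexists; apply is_RInt_mul_gauss).
  apply Rle_trans with (RInt (fun t => / y * (t * gauss t)) y b).
  - apply RInt_le; [exact Hyb | apply ex_RInt_gauss | apply (ex_RInt_scal (V:=R_CompleteNormedModule)), Ex |].
    intros t Ht. assert (G := gauss_pos t).
    replace (gauss t) with (/ y * (y * gauss t)) at 1 by (field; lra).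
    apply Rmult_le_compat_l; [apply Rlt_le, Rinv_0_lt_compat, Hy |].
    apply Rmult_le_compat_r; lra.
  - rewrite (RInt_scal (V:=R_CompleteNormedModule)) by exact Ex.
    rewrite (is_RInt_unique (V:=R_CompleteNormedModule) _ _ _ _ (is_RInt_mul_gauss y b)).
    unfold scal; simpl; unfold mult; simpl. assert (G := gauss_pos b).
    unfold Rdiv. rewrite Rmult_comm.
    apply Rmult_le_compat_r; [apply Rlt_le, Rinv_0_lt_compat, Hy | lra].
Qed.

(* Mills' inequality; the bound of [gauss_int_sub_le] survives the limit [b -> +oo]. *)
Lemma mills_ineq y : 0 < y -> y * gauss_tail y <= gauss y.
Proof.
  intros Hy.
  assert (L : Rbar_le gauss_half (gauss_int y + gauss y / y)).
  { apply (is_lim_le_loc gauss_int (fun _ => gauss_int y + gauss y / y) p_infty).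
    - exists y. intros b Hb. assert (S := gauss_int_sub_le y b (conj Hy (Rlt_le _ _ Hb))). lra.
    - exact is_lim_gauss_int.
    - apply is_lim_const. }
  simpl in L. unfold gauss_tail.
  apply Rmult_le_reg_r with (/ y); [apply Rinv_0_lt_compat, Hy |].
  replace (y * (gauss_half - gauss_int y) * / y) with (gauss_half - gauss_int y) by (field; lra).
  unfold Rdiv in L. lra.
Qed.

Definition inv_mills (y : R) : R := gauss y / gauss_tail y.

Lemma is_derive_inv_mills y :
  is_derive inv_mills y (gauss y * (gauss y - y * gauss_tail y) / gauss_tail y ^ 2).
Proof.
  assert (T := gauss_tail_pos y).
  unfold inv_mills. eapply is_derive_ext; [reflexivity |].
  replace (gauss y * (gauss y - y * gauss_tail y) / gauss_tail y ^ 2)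
    with ((- y * gauss y * gauss_tail y - gauss y * - gauss y) / gauss_tail y ^ 2)
    by (field; lra).
  apply is_derive_div; [apply is_derive_gauss | apply is_derive_gauss_tail | lra].
Qed.

Lemma inv_mills_nondecreasing a b : a <= b -> inv_mills a <= inv_mills b.
Proof.
  apply (nondecreasing_of_derive_nonneg _ _ is_derive_inv_mills).
  intros y. assert (G := gauss_pos y). assert (T := gauss_tail_pos y).
  assert (M : y * gauss_tail y <= gauss y).
  { destruct (Rle_lt_dec y 0); [nra | apply mills_ineq; assumption]. }
  apply Rmult_le_pos; [nra | apply Rlt_le, Rinv_0_lt_compat, pow_lt, T].
Qed.

Lemma ln_gauss_tail_tangent m y :
  ln (gauss_tail y) <= ln (gauss_tail m) + - inv_mills m * (y - m).
Proof.
  apply (tangent_ge_of_derive_nonincreasing (fun z => ln (gauss_tail z)) (fun z => - inv_mills z)).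
  - intros x. assert (T := gauss_tail_pos x).
    replace (- inv_mills x) with (- gauss x * / gauss_tail x) by (unfold inv_mills; field; lra).
    apply (is_derive_comp ln gauss_tail); [apply is_derive_ln, T | apply is_derive_gauss_tail].
  - intros a b Hab. assert (I := inv_mills_nondecreasing a b Hab). lra.
Qed.

(** * Jensen's inequality for finite products *)

Lemma sumN_le N f g : (forall i, (i < N)%nat -> f i <= g i) -> sumN N f <= sumN N g.
Proof. induction N; simpl; intros H; [lra |]. apply Rplus_le_compat; auto. Qed.

Lemma sumN_affine N a b f : sumN N (fun i => a + b * f i) = INR N * a + b * sumN N f.
Proof. induction N; simpl sumN; [simpl; ring |]. rewrite IHN, S_INR. ring. Qed.

Lemma sumN_const N c : sumN N (fun _ => c) = INR N * c.
Proof. induction N; simpl sumN; [simpl; ring |]. rewrite IHN, S_INR. ring. Qed.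

Lemma prodN_exp_sumN_ln N f : (forall i, (i < N)%nat -> 0 < f i) ->
  prodN N f = exp (sumN N (fun i => ln (f i))).
Proof.
  induction N; simpl; intros H; [symmetry; apply exp_0 |].
  rewrite exp_plus, IHN, exp_ln by auto. reflexivity.
Qed.

Lemma sumN_le_tangent (g : R -> R) s m N x :
  (forall y, g y <= g m + s * (y - m)) -> sumN N x = INR N * m ->
  sumN N (fun i => g (x i)) <= sumN N (fun _ => g m).
Proof.
  intros Tg Hx.
  apply Rle_trans with (sumN N (fun i => (g m - s * m) + s * x i)).
  - apply sumN_le. intros i _. specialize (Tg (x i)). lra.
  - rewrite sumN_affine, sumN_const, Hx. right. ring.
Qed.

Lemma prodN_le_of_ln_tangent (f : R -> R) s m N x :
  (forall y, 0 < f y) -> (forall y, ln (f y) <= ln (f m) + s * (y - m)) ->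
  sumN N x = INR N * m ->
  prodN N (fun i => f (x i)) <= prodN N (fun _ => f m).
Proof.
  intros Pos Tg Hx. rewrite !prodN_exp_sumN_ln by auto.
  apply exp_le_exp. exact (sumN_le_tangent (fun y => ln (f y)) s m N x Tg Hx).
Qed.

Theorem corollary1 (N n : nat) (k gamma : R) :
  (1 <= N)%nat -> (0 < n)%nat -> 0 < k -> 0 < gamma ->
  forall kv : nat -> R,
    (forall i, (i < N)%nat -> 0 <= kv i) ->
    sumN N kv = k ->
    prodN N (fun i => 1 - eps n (kv i) gamma)
      <= prodN N (fun _ => 1 - eps n (k / INR N) gamma).
Proof.
  (* [ln T] is concave on all of [R]. *)
  intros HN _ _ _ kv _ Hsum.
  set (A := / 2 * log2 (1 + gamma)).
  set (B := log2 (exp 1) * sqrt (/ (2 * INR n) * (1 - / (1 + gamma) ^ 2))).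
  set (a := / INR n * / B). set (b := - (A * / B)).
  assert (E : forall z, 1 - eps n z gamma = gauss_tail (a * z + b) / (2 * gauss_half)).
  { intros z. unfold eps. rewrite one_sub_Qfun. fold A B. unfold a, b, Rdiv.
    do 2 f_equal. ring. }
  assert (H2 : 0 < 2 * gauss_half) by (assert (H := gauss_half_pos); lra).
  set (m := k / INR N).
  apply (prodN_le_of_ln_tangent (fun z => 1 - eps n z gamma) (- inv_mills (a * m + b) * a)).
  - intros z. rewrite E. apply Rdiv_lt_0_compat; [apply gauss_tail_pos | exact H2].
  - intros z. rewrite !E, !ln_div by (apply gauss_tail_pos || exact H2).
    assert (Tg := ln_gauss_tail_tangent (a * m + b) (a * z + b)).
    replace (- inv_mills (a * m + b) * (a * z + b - (a * m + b)))
      with (- inv_mills (a * m + b) * a * (z - m)) in Tg by ring.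
    lra.
  - rewrite Hsum. unfold m. field. apply not_0_INR. lia.
Qed.
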